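(* Let $p,q$ be primes congruent to $1$ modulo $4$, let $r$ be a positive integer, and let $m=4+8c$ for a nonnegative integer $c$. If $2mp^r-m^2q^2>0$, then $2mp^r-m^2q^2$ is good.
   Context: A positive integer is called good if it is not of the form $4^\alpha(8\beta+7)$ for integers $\alpha,\beta\ge 0$. *)

From mathcomp Require Import all_boot.
Set Implicit Arguments. Unset Strict Implicit. Unset Printing Implicit Defensive.

Definition good (n : nat) : Prop :=
  0 < n /\ ~ (exists a b : nat, n = 4 ^ a * (8 * b + 7)).

(** With [s = 2 c + 1] we have [m = 4 s] and the number equals
    [8 s (p^r - 2 s q^2)]; both [s] and [p^r - 2 s q^2] are odd, so its
    2-adic valuation is 3, while [4^a (8 b + 7)] has even 2-adic valuation. *)

From mathcomp Require Import all_boot.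

Lemma logn2_odd (k : nat) : odd k -> logn 2 k = 0.
Proof. by move=> k_odd; apply: logn_coprime; rewrite coprime2n. Qed.

Lemma logn2_pow2_mul_odd (e k : nat) : odd k -> logn 2 (2 ^ e * k) = e.
Proof.
move=> k_odd; rewrite lognM ?expn_gt0 ?(odd_gt0 k_odd) //.
by rewrite pfactorK // logn2_odd // addn0.
Qed.

Lemma good_mul8_odd (k : nat) : odd k -> good (8 * k).
Proof.
move=> k_odd; split; first by rewrite muln_gt0 (odd_gt0 k_odd).
case=> a [b eq8k].
have odd_8b7 : odd (8 * b + 7) by rewrite oddD oddM.
have /(congr1 (logn 2)) : 2 ^ 3 * k = 2 ^ (2 * a) * (8 * b + 7).
  by rewrite expnM eq8k.
rewrite !logn2_pow2_mul_odd // => /(congr1 odd).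
by rewrite oddM.
Qed.

Lemma odd_exp_1mod4 (p r : nat) : p %% 4 = 1 -> odd (p ^ r).
Proof.
by move=> p_mod4; rewrite oddX (divn_eq p 4) p_mod4 oddD oddM andbF orbT.
Qed.

Lemma mul4_sub_factor (s P Q : nat) :
  2 * (4 * s) * P - (4 * s) ^ 2 * Q = 8 * s * (P - 2 * s * Q).
Proof.
rewrite mulnBr; congr (_ - _); first by rewrite [2 * _]mulnA.
by rewrite expnMn -[4 ^ 2]/(8 * 2) -!mulnA [s * (2 * _)]mulnCA mulnA.
Qed.

Lemma good_mul8_odd_sub (s P Q : nat) :
  odd s -> odd P -> 0 < 8 * s * (P - 2 * s * Q) ->
  good (8 * s * (P - 2 * s * Q)).
Proof.
move=> s_odd P_odd; rewrite muln_gt0 subn_gt0 => /andP[_ /ltnW le_P].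
rewrite -mulnA; apply: good_mul8_odd.
by rewrite oddM s_odd oddB // P_odd -mulnA oddM.
Qed.

Theorem mainTheorem5 (p q r c : nat) :
  prime p -> p %% 4 = 1 -> prime q -> q %% 4 = 1 -> 0 < r ->
  let m := 4 + 8 * c in
  m ^ 2 * q ^ 2 < 2 * m * p ^ r ->
  good (2 * m * p ^ r - m ^ 2 * q ^ 2).
Proof.
move=> _ p_mod4 _ _ _ m.
have -> : m = 4 * (2 * c + 1) by rewrite /m mulnDr mulnA addnC.
rewrite -subn_gt0 !mul4_sub_factor.
apply: good_mul8_odd_sub; last exact: odd_exp_1mod4.
by rewrite addn1 /= oddM.
Qed.
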